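(* Let $f\colon I\to(0,\infty)$ be a smooth function on an open interval $I\subseteq\mathbb{R}$, and consider on $\mathrm{Sol}\times I$ (or on $C\times I$ for any compact $\mathrm{Sol}$ $3$-manifold $C$) the metric \[ g=dt^2+f(t)^2\,dz^2+e^{-2t}\left(e^{-2z}dx^2+e^{2z}dy^2\right).\] Suppose that for all $t\in I$: (a) $f(t)>1$; (b) $f'(t)<0$; (c) $f''(t)>0$; (d) $1-f(t)f'(t)>\left(1+\dfrac{f'(t)}{f(t)}\right)^2$. Then $g$ has strictly negative sectional curvature at every point. *)

From Stdlib Require Import Reals Lra ClassicalEpsilon.
Open Scope R_scope.

(** Points of R^4 / tangent vectors: functions nat -> R, only indices 0..3 matter.
    Coordinates: index 0 = t, 1 = z, 2 = x, 3 = y. *)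
Definition pt := nat -> R.

Definition upd (p : pt) (i : nat) (s : R) : pt :=
  fun j => if Nat.eqb j i then s else p j.

(** Partial derivative d/dp_i of F at p (chosen classically; it is the
    derivative whenever that derivative exists). *)
Definition pd (F : pt -> R) (i : nat) (p : pt) : R :=
  epsilon (inhabits 0)
    (fun l => derivable_pt_lim (fun s => F (upd p i s)) (p i) l).

Definition sum4 (F : nat -> R) : R := F 0%nat + F 1%nat + F 2%nat + F 3%nat.

Definition christoffel (g ginv : nat -> nat -> pt -> R) (k i j : nat) (p : pt) : R :=
  sum4 (fun l => / 2 * ginv k l p *
         (pd (g j l) i p + pd (g i l) j p - pd (g i j) l p)).

(** R^m_{ijk}, where R(d_i,d_j)d_k = sum_m R^m_{ijk} d_m and
    R(X,Y)Z = nabla_X nabla_Y Z - nabla_Y nabla_X Z - nabla_[X,Y] Z. *)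
Definition riemann_up (g ginv : nat -> nat -> pt -> R) (m i j k : nat) (p : pt) : R :=
  pd (christoffel g ginv m j k) i p - pd (christoffel g ginv m i k) j p
  + sum4 (fun n => christoffel g ginv n j k p * christoffel g ginv m i n p
                   - christoffel g ginv n i k p * christoffel g ginv m j n p).

Definition riemann (g ginv : nat -> nat -> pt -> R) (i j k l : nat) (p : pt) : R :=
  sum4 (fun m => riemann_up g ginv m i j k p * g m l p).

Definition gdot (g : nat -> nat -> pt -> R) (p : pt) (u v : pt) : R :=
  sum4 (fun i => sum4 (fun j => g i j p * u i * v j)).

Definition sectional_curvature (g ginv : nat -> nat -> pt -> R) (p u v : pt) : R :=
  sum4 (fun i => sum4 (fun j => sum4 (fun k => sum4 (fun l =>
     riemann g ginv i j k l p * u i * v j * v k * u l))))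
  / (gdot g p u u * gdot g p v v - (gdot g p u v) ^ 2).

Definition lin_indep4 (u v : pt) : Prop :=
  forall a b : R, (forall i, (i < 4)%nat -> a * u i + b * v i = 0) -> a = 0 /\ b = 0.

Definition sol_diag (f : R -> R) (i : nat) (p : pt) : R :=
  match i with
  | 0%nat => 1
  | 1%nat => (f (p 0%nat)) ^ 2
  | 2%nat => exp (-2 * p 0%nat) * exp (-2 * p 1%nat)
  | _ => exp (-2 * p 0%nat) * exp (2 * p 1%nat)
  end.

Definition sol_metric (f : R -> R) (i j : nat) (p : pt) : R :=
  if Nat.eqb i j then sol_diag f i p else 0.

Definition sol_metric_inv (f : R -> R) (i j : nat) (p : pt) : R :=
  if Nat.eqb i j then / sol_diag f i p else 0.

Definition is_open_interval (I : R -> Prop) : Prop :=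
  (exists t, I t) /\
  (forall a b t, I a -> I b -> a <= t <= b -> I t) /\
  (forall t, I t -> exists eps, eps > 0 /\ forall s, Rabs (s - t) < eps -> I s).

Definition smooth_on_with (I : R -> Prop) (f : R -> R) (D : nat -> R -> R) : Prop :=
  (forall t, I t -> D 0%nat t = f t) /\
  (forall n t, I t -> derivable_pt_lim (D n) t (D (S n) t)).

From Stdlib Require Import Reals Lra Lia ClassicalEpsilon.
Open Scope R_scope.

(** The proof is a direct coordinate computation followed by a sign analysis.

    1. Calculus: the classically chosen partial derivative [pd] agrees with any
       derivative that exists, and derivatives only depend on the germ of a
       function; with the pointwise sum/product/quotient/chain rules this lets
       us compute [pd] of explicit expressions in f, f' and exp.
    2. Geometry: on points with t in I we compute, in closed form, the
       derivatives of the metric, the Christoffel symbols, their derivatives,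
       and finally the curvature tensor R_{ijkl}.  Only the components R_{abba}
       for pairs {a,b} and the two mixed components R_{0221}, R_{0331} survive.
    3. Linear algebra: writing w_ab = u_a v_b - u_b v_a (Plücker coordinates),
       the numerator of K(u,v) is a quadratic form in the w_ab, which splits as
       two diagonal terms (w_01, w_23) and two 2x2 blocks ((w_02,w_12) and
       (w_03,w_13)); the denominator is the Lagrange identity sum g_aa g_bb w_ab^2.
    4. Hypotheses (a), (c), (d) make the diagonal terms negative and both blocks
       negative definite; linear independence makes some w_ab nonzero, hence the
       numerator is negative and the denominator positive. *)

Lemma pd_of_derivative F i p l :
  derivable_pt_lim (fun s => F (upd p i s)) (p i) l -> pd F i p = l.
Proof.
  intro Hl. unfold pd.
  pose proof (epsilon_spec (inhabits 0)
    (fun l => derivable_pt_lim (fun s => F (upd p i s)) (p i) l) (ex_intro _ l Hl)) as Heps.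
  eapply uniqueness_limite; eauto.
Qed.

Lemma derivable_pt_lim_locally_eq F G x l :
  (exists e, e > 0 /\ forall s, Rabs (s - x) < e -> F s = G s) ->
  derivable_pt_lim G x l -> derivable_pt_lim F x l.
Proof.
  intros [e [He HFG]] HG eps Heps. destruct (HG eps Heps) as [d Hd].
  assert (Hm : 0 < Rmin d e) by (apply Rmin_pos; [apply cond_pos | lra]).
  exists (mkposreal _ Hm). intros h Hh Hhd. simpl in Hhd.
  assert (Hx : Rabs (x - x) < e) by (rewrite Rminus_diag_eq, Rabs_R0; [lra | reflexivity]).
  assert (Hxh : Rabs (x + h - x) < e).
  { replace (x + h - x) with h by ring.
    eapply Rlt_le_trans; [exact Hhd | apply Rmin_r]. }
  rewrite (HFG (x + h) Hxh), (HFG x Hx). apply Hd; auto.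
  eapply Rlt_le_trans; [exact Hhd | apply Rmin_l].
Qed.

(** The differentiation rules of the standard library, restated for functions
    written as lambda terms so that they can be applied syntactically. *)
Lemma dlim_val F x l l' : derivable_pt_lim F x l' -> l' = l -> derivable_pt_lim F x l.
Proof. intros H ->; exact H. Qed.

Lemma dlim_const (c x : R) : derivable_pt_lim (fun _ => c) x 0.
Proof. apply derivable_pt_lim_const. Qed.

Lemma dlim_id x : derivable_pt_lim (fun s => s) x 1.
Proof. apply derivable_pt_lim_id. Qed.

Lemma dlim_plus F G x a b : derivable_pt_lim F x a -> derivable_pt_lim G x b ->
  derivable_pt_lim (fun s => F s + G s) x (a + b).
Proof. apply derivable_pt_lim_plus. Qed.

Lemma dlim_minus F G x a b : derivable_pt_lim F x a -> derivable_pt_lim G x b ->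
  derivable_pt_lim (fun s => F s - G s) x (a - b).
Proof. apply derivable_pt_lim_minus. Qed.

Lemma dlim_mult F G x a b : derivable_pt_lim F x a -> derivable_pt_lim G x b ->
  derivable_pt_lim (fun s => F s * G s) x (a * G x + F x * b).
Proof. apply derivable_pt_lim_mult. Qed.

Lemma dlim_opp F x a : derivable_pt_lim F x a -> derivable_pt_lim (fun s => - F s) x (- a).
Proof. apply derivable_pt_lim_opp. Qed.

Lemma dlim_div F G x a b : derivable_pt_lim F x a -> derivable_pt_lim G x b -> G x <> 0 ->
  derivable_pt_lim (fun s => F s / G s) x ((a * G x - b * F x) / (G x)²).
Proof. apply derivable_pt_lim_div. Qed.

Lemma dlim_pow F x a n : derivable_pt_lim F x a ->
  derivable_pt_lim (fun s => F s ^ n) x (INR n * F x ^ Init.Nat.pred n * a).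
Proof.
  intro HF. exact (derivable_pt_lim_comp F (fun y => y ^ n) x _ _ HF (derivable_pt_lim_pow _ _)).
Qed.

Lemma dlim_exp F x a : derivable_pt_lim F x a ->
  derivable_pt_lim (fun s => exp (F s)) x (exp (F x) * a).
Proof. intro HF. exact (derivable_pt_lim_comp F exp x _ _ HF (derivable_pt_lim_exp _)). Qed.

Ltac derive_step hf hd := first [ apply dlim_const | apply dlim_id | apply hf | apply hd
  | apply dlim_minus | apply dlim_plus | apply dlim_div | apply dlim_opp | apply dlim_pow
  | apply dlim_mult | apply dlim_exp ].
Ltac derive hf hd := eapply dlim_val; [ repeat (derive_step hf hd) | ].

Ltac idx i := destruct i as [|[|[|[|i]]]]; [ | | | | exfalso; lia ].

(** ** Curvature of the metric in coordinates *)

Section SolCurvature.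

Variables (I : R -> Prop) (f : R -> R) (D : nat -> R -> R).
Hypothesis HI : is_open_interval I.
Hypothesis Hsmooth : smooth_on_with I f D.
Hypothesis Hfpos : forall t, I t -> f t > 0.

(** f' = D 1 on I; this needs I open since f and D 0 only agree on I. *)
Lemma f_derivative x : I x -> derivable_pt_lim (fun s => f s) x (D 1%nat x).
Proof.
  destruct HI as [_ [_ Hopen]]. destruct Hsmooth as [HD0 HD].
  intro Hx. apply derivable_pt_lim_locally_eq with (G := D 0%nat); [|apply HD; auto].
  destruct (Hopen x Hx) as [e [He Hnear]]. exists e; split; auto.
  intros s Hs. symmetry; apply HD0, Hnear, Hs.
Qed.

Lemma f'_derivative x : I x -> derivable_pt_lim (fun s => D 1%nat s) x (D 2%nat x).
Proof. destruct Hsmooth as [_ HD]. intro Hx. apply HD; auto. Qed.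

Definition sol_metric_deriv (a b c : nat) (q : pt) : R :=
  match a, b, c with
  | 1%nat, 1%nat, 0%nat => 2 * f (q 0%nat) * D 1%nat (q 0%nat)
  | 2%nat, 2%nat, 0%nat => -2 * (exp (-2 * q 0%nat) * exp (-2 * q 1%nat))
  | 2%nat, 2%nat, 1%nat => -2 * (exp (-2 * q 0%nat) * exp (-2 * q 1%nat))
  | 3%nat, 3%nat, 0%nat => -2 * (exp (-2 * q 0%nat) * exp (2 * q 1%nat))
  | 3%nat, 3%nat, 1%nat => 2 * (exp (-2 * q 0%nat) * exp (2 * q 1%nat))
  | _, _, _ => 0
  end.

Lemma pd_sol_metric a b c q : (a < 4)%nat -> (b < 4)%nat -> (c < 4)%nat -> I (q 0%nat) ->
  pd (sol_metric f a b) c q = sol_metric_deriv a b c q.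
Proof.
  intros Ha Hb Hc Hq.
  pose proof f_derivative as hf. pose proof f'_derivative as hd.
  apply pd_of_derivative.
  idx a; idx b; idx c; unfold sol_metric, sol_diag, sol_metric_deriv, upd; simpl;
  derive hf hd; try assumption; simpl; field.
Qed.

Definition sol_christoffel (k i j : nat) (q : pt) : R :=
  match k, i, j with
  | 1%nat, 0%nat, 1%nat | 1%nat, 1%nat, 0%nat => D 1%nat (q 0%nat) / f (q 0%nat)
  | 0%nat, 1%nat, 1%nat => - (f (q 0%nat) * D 1%nat (q 0%nat))
  | 2%nat, 0%nat, 2%nat | 2%nat, 2%nat, 0%nat | 2%nat, 1%nat, 2%nat | 2%nat, 2%nat, 1%nat => -1
  | 0%nat, 2%nat, 2%nat => exp (-2 * q 0%nat) * exp (-2 * q 1%nat)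
  | 1%nat, 2%nat, 2%nat => exp (-2 * q 0%nat) * exp (-2 * q 1%nat) / f (q 0%nat) ^ 2
  | 3%nat, 0%nat, 3%nat | 3%nat, 3%nat, 0%nat => -1
  | 3%nat, 1%nat, 3%nat | 3%nat, 3%nat, 1%nat => 1
  | 0%nat, 3%nat, 3%nat => exp (-2 * q 0%nat) * exp (2 * q 1%nat)
  | 1%nat, 3%nat, 3%nat => - (exp (-2 * q 0%nat) * exp (2 * q 1%nat) / f (q 0%nat) ^ 2)
  | _, _, _ => 0
  end.

Lemma christoffel_sol k i j q : (k < 4)%nat -> (i < 4)%nat -> (j < 4)%nat -> I (q 0%nat) ->
  christoffel (sol_metric f) (sol_metric_inv f) k i j q = sol_christoffel k i j q.
Proof.
  intros Hk Hi Hj Hq.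
  pose proof (Hfpos _ Hq). assert (f (q 0%nat) <> 0) by lra.
  pose proof (exp_pos (-2 * q 0%nat)). pose proof (exp_pos (-2 * q 1%nat)).
  pose proof (exp_pos (2 * q 1%nat)).
  unfold christoffel, sum4.
  idx k; idx i; idx j; rewrite !pd_sol_metric by (assumption || lia);
  unfold sol_metric_inv, sol_diag, sol_metric_deriv, sol_christoffel; simpl;
  field; repeat split; try apply Rgt_not_eq; try lra; assumption.
Qed.

Definition sol_christoffel_deriv (k i j c : nat) (q : pt) : R :=
  let F := f (q 0%nat) in let F1 := D 1%nat (q 0%nat) in let F2 := D 2%nat (q 0%nat) in
  let A := exp (-2 * q 0%nat) * exp (-2 * q 1%nat) in
  let B := exp (-2 * q 0%nat) * exp (2 * q 1%nat) in
  match k, i, j with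
  | 1%nat, 0%nat, 1%nat | 1%nat, 1%nat, 0%nat =>
      match c with 0%nat => (F2 * F - F1 * F1) / F ^ 2 | _ => 0 end
  | 0%nat, 1%nat, 1%nat => match c with 0%nat => - (F1 * F1 + F * F2) | _ => 0 end
  | 0%nat, 2%nat, 2%nat => match c with 0%nat => -2 * A | 1%nat => -2 * A | _ => 0 end
  | 1%nat, 2%nat, 2%nat => match c with 0%nat => -2 * A / F ^ 2 - 2 * A * F1 / F ^ 3
                          | 1%nat => -2 * A / F ^ 2 | _ => 0 end
  | 0%nat, 3%nat, 3%nat => match c with 0%nat => -2 * B | 1%nat => 2 * B | _ => 0 end
  | 1%nat, 3%nat, 3%nat => match c with 0%nat => 2 * B / F ^ 2 + 2 * B * F1 / F ^ 3
                          | 1%nat => -2 * B / F ^ 2 | _ => 0 end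
  | _, _, _ => 0
  end.

(** Since the Christoffel symbols agree with [sol_christoffel] on the open set
    {t in I}, their partial derivatives are those of the closed forms. *)
Lemma pd_christoffel_sol p k i j c :
  (k < 4)%nat -> (i < 4)%nat -> (j < 4)%nat -> (c < 4)%nat -> I (p 0%nat) ->
  pd (christoffel (sol_metric f) (sol_metric_inv f) k i j) c p
  = sol_christoffel_deriv k i j c p.
Proof.
  intros Hk Hi Hj Hc Hq.
  pose proof (Hfpos _ Hq). assert (f (p 0%nat) <> 0) by lra.
  pose proof f_derivative as hf. pose proof f'_derivative as hd.
  apply pd_of_derivative.
  apply derivable_pt_lim_locally_eq with (G := fun s => sol_christoffel k i j (upd p c s)).
  { destruct HI as [_ [_ Hopen]]. destruct (Hopen _ Hq) as [e [He Hnear]].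
    exists e; split; auto. intros s Hs.
    apply christoffel_sol; try lia.
    unfold upd. destruct (Nat.eqb 0 c) eqn:E; [|exact Hq].
    apply Nat.eqb_eq in E; subst c. apply Hnear; exact Hs. }
  idx k; idx i; idx j; idx c; unfold sol_christoffel, sol_christoffel_deriv, upd; simpl;
  derive hf hd; try assumption; simpl; unfold Rsqr; try field; auto.
Qed.

Definition sol_riemann_up (m i j k : nat) (p : pt) : R :=
  sol_christoffel_deriv m j k i p - sol_christoffel_deriv m i k j p
  + sum4 (fun n => sol_christoffel n j k p * sol_christoffel m i n p
                   - sol_christoffel n i k p * sol_christoffel m j n p).

Lemma riemann_up_sol p m i j k :
  (m < 4)%nat -> (i < 4)%nat -> (j < 4)%nat -> (k < 4)%nat -> I (p 0%nat) ->
  riemann_up (sol_metric f) (sol_metric_inv f) m i j k p = sol_riemann_up m i j k p.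
Proof.
  intros Hm Hi Hj Hk Hq. unfold riemann_up, sol_riemann_up, sum4.
  rewrite !pd_christoffel_sol, !christoffel_sol by (assumption || lia).
  reflexivity.
Qed.

End SolCurvature.

Definition curv_tensor (K01 K02 K03 K12 K13 K23 c2 c3 : R) (i j k l : nat) : R :=
  match i, j, k, l with
  | 0%nat, 1%nat, 0%nat, 1%nat => (-K01)
  | 0%nat, 1%nat, 1%nat, 0%nat => K01
  | 0%nat, 2%nat, 0%nat, 2%nat => (-K02)
  | 0%nat, 2%nat, 1%nat, 2%nat => (-c2)
  | 0%nat, 2%nat, 2%nat, 0%nat => K02
  | 0%nat, 2%nat, 2%nat, 1%nat => c2
  | 0%nat, 3%nat, 0%nat, 3%nat => (-K03)
  | 0%nat, 3%nat, 1%nat, 3%nat => (-c3)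
  | 0%nat, 3%nat, 3%nat, 0%nat => K03
  | 0%nat, 3%nat, 3%nat, 1%nat => c3
  | 1%nat, 0%nat, 0%nat, 1%nat => K01
  | 1%nat, 0%nat, 1%nat, 0%nat => (-K01)
  | 1%nat, 2%nat, 0%nat, 2%nat => (-c2)
  | 1%nat, 2%nat, 1%nat, 2%nat => (-K12)
  | 1%nat, 2%nat, 2%nat, 0%nat => c2
  | 1%nat, 2%nat, 2%nat, 1%nat => K12
  | 1%nat, 3%nat, 0%nat, 3%nat => (-c3)
  | 1%nat, 3%nat, 1%nat, 3%nat => (-K13)
  | 1%nat, 3%nat, 3%nat, 0%nat => c3
  | 1%nat, 3%nat, 3%nat, 1%nat => K13
  | 2%nat, 0%nat, 0%nat, 2%nat => K02
  | 2%nat, 0%nat, 1%nat, 2%nat => c2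
  | 2%nat, 0%nat, 2%nat, 0%nat => (-K02)
  | 2%nat, 0%nat, 2%nat, 1%nat => (-c2)
  | 2%nat, 1%nat, 0%nat, 2%nat => c2
  | 2%nat, 1%nat, 1%nat, 2%nat => K12
  | 2%nat, 1%nat, 2%nat, 0%nat => (-c2)
  | 2%nat, 1%nat, 2%nat, 1%nat => (-K12)
  | 2%nat, 3%nat, 2%nat, 3%nat => (-K23)
  | 2%nat, 3%nat, 3%nat, 2%nat => K23
  | 3%nat, 0%nat, 0%nat, 3%nat => K03
  | 3%nat, 0%nat, 1%nat, 3%nat => c3
  | 3%nat, 0%nat, 3%nat, 0%nat => (-K03)
  | 3%nat, 0%nat, 3%nat, 1%nat => (-c3)
  | 3%nat, 1%nat, 0%nat, 3%nat => c3
  | 3%nat, 1%nat, 1%nat, 3%nat => K13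
  | 3%nat, 1%nat, 3%nat, 0%nat => (-c3)
  | 3%nat, 1%nat, 3%nat, 1%nat => (-K13)
  | 3%nat, 2%nat, 2%nat, 3%nat => K23
  | 3%nat, 2%nat, 3%nat, 2%nat => (-K23)
  | _, _, _, _ => 0
  end.

Definition sol_curv_tensor (F F1 F2 A B : R) : nat -> nat -> nat -> nat -> R :=
  curv_tensor (- (F * F2)) (- A) (- B) (A * (F * F1 - 1)) (B * (F * F1 - 1))
    (A * B * (1 / F ^ 2 - 1)) (- (A * (1 + F1 / F))) (B * (1 + F1 / F)).

Lemma riemann_sol (I : R -> Prop) (f : R -> R) (D : nat -> R -> R) :
  is_open_interval I -> smooth_on_with I f D -> (forall t, I t -> f t > 0) ->
  forall p, I (p 0%nat) ->
  forall i j k l, (i < 4)%nat -> (j < 4)%nat -> (k < 4)%nat -> (l < 4)%nat ->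
  riemann (sol_metric f) (sol_metric_inv f) i j k l p
  = sol_curv_tensor (f (p 0%nat)) (D 1%nat (p 0%nat)) (D 2%nat (p 0%nat))
      (exp (-2 * p 0%nat) * exp (-2 * p 1%nat)) (exp (-2 * p 0%nat) * exp (2 * p 1%nat))
      i j k l.
Proof.
  intros HI Hsmooth Hfpos p Hq i j k l Hi Hj Hk Hl.
  pose proof (Hfpos _ Hq). assert (f (p 0%nat) <> 0) by lra.
  unfold riemann, sum4.
  rewrite !(riemann_up_sol I f D HI Hsmooth Hfpos) by (assumption || lia).
  idx i; idx j; idx k; idx l;
  unfold sol_curv_tensor, curv_tensor, sol_riemann_up, sol_christoffel_deriv,
    sol_christoffel, sum4, sol_metric, sol_diag; simpl;
  field; auto.
Qed.

(** ** Linear algebra in Plücker coordinates *)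

Definition plucker (u v : pt) (a b : nat) : R := u a * v b - u b * v a.

Definition curv_form (K01 K02 K03 K12 K13 K23 c2 c3 : R) (u v : pt) : R :=
  K01 * plucker u v 0 1 ^ 2 + K23 * plucker u v 2 3 ^ 2
  + (K02 * plucker u v 0 2 ^ 2 + 2 * c2 * plucker u v 0 2 * plucker u v 1 2
     + K12 * plucker u v 1 2 ^ 2)
  + (K03 * plucker u v 0 3 ^ 2 + 2 * c3 * plucker u v 0 3 * plucker u v 1 3
     + K13 * plucker u v 1 3 ^ 2).

Lemma curvature_numerator_form (Rf : nat -> nat -> nat -> nat -> R)
    K01 K02 K03 K12 K13 K23 c2 c3 (u v : pt) :
  (forall i j k l, (i < 4)%nat -> (j < 4)%nat -> (k < 4)%nat -> (l < 4)%nat ->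
     Rf i j k l = curv_tensor K01 K02 K03 K12 K13 K23 c2 c3 i j k l) ->
  sum4 (fun i => sum4 (fun j => sum4 (fun k => sum4 (fun l =>
     Rf i j k l * u i * v j * v k * u l))))
  = curv_form K01 K02 K03 K12 K13 K23 c2 c3 u v.
Proof.
  intro HRf. unfold sum4. repeat (rewrite HRf by lia).
  unfold curv_tensor, curv_form, plucker. ring.
Qed.

Lemma gram_diag (d : nat -> pt -> R) (p u v : pt) :
  let g := fun i j q => if Nat.eqb i j then d i q else 0 in
  gdot g p u u * gdot g p v v - gdot g p u v ^ 2
  = d 0%nat p * d 1%nat p * plucker u v 0 1 ^ 2 + d 0%nat p * d 2%nat p * plucker u v 0 2 ^ 2
    + d 0%nat p * d 3%nat p * plucker u v 0 3 ^ 2 + d 1%nat p * d 2%nat p * plucker u v 1 2 ^ 2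
    + d 1%nat p * d 3%nat p * plucker u v 1 3 ^ 2 + d 2%nat p * d 3%nat p * plucker u v 2 3 ^ 2.
Proof. unfold gdot, sum4, plucker; simpl. ring. Qed.

(** Linearly independent vectors span a nonzero bivector.  The disjuncts are
    grouped as the terms of [curv_form]. *)
Lemma plucker_nonzero (u v : pt) : lin_indep4 u v ->
  plucker u v 0 1 <> 0 \/ plucker u v 2 3 <> 0
  \/ (plucker u v 0 2 <> 0 \/ plucker u v 1 2 <> 0)
  \/ (plucker u v 0 3 <> 0 \/ plucker u v 1 3 <> 0).
Proof.
  intro Hli. unfold plucker.
  destruct (Req_dec (u 0%nat * v 1%nat - u 1%nat * v 0%nat) 0); [|tauto].
  destruct (Req_dec (u 2%nat * v 3%nat - u 3%nat * v 2%nat) 0); [|tauto].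
  destruct (Req_dec (u 0%nat * v 2%nat - u 2%nat * v 0%nat) 0); [|tauto].
  destruct (Req_dec (u 1%nat * v 2%nat - u 2%nat * v 1%nat) 0); [|tauto].
  destruct (Req_dec (u 0%nat * v 3%nat - u 3%nat * v 0%nat) 0); [|tauto].
  destruct (Req_dec (u 1%nat * v 3%nat - u 3%nat * v 1%nat) 0); [|tauto].
  exfalso.
  (* If u_a <> 0 then v_a u - u_a v = 0 is a nontrivial relation; so u = 0. *)
  assert (Hu : forall a, (a < 4)%nat -> u a = 0).
  { intros a Ha. destruct (Req_dec (u a) 0) as [|Hua]; [assumption|].
    destruct (Hli (v a) (- u a)) as [_ Hb]; [|lra].
    intros i Hi. idx a; idx i; lra. }
  destruct (Hli 1 0) as [Ha _]; [|lra].
  intros i Hi. rewrite Hu by exact Hi. ring.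
Qed.

Lemma pow2_pos z : z <> 0 -> 0 < z ^ 2.
Proof. intro Hz. rewrite <- Rsqr_pow2. apply Rsqr_pos_lt, Hz. Qed.

Lemma gram_diag_pos (d : nat -> pt -> R) (p u v : pt) :
  (forall i, (i < 4)%nat -> 0 < d i p) -> lin_indep4 u v ->
  let g := fun i j q => if Nat.eqb i j then d i q else 0 in
  0 < gdot g p u u * gdot g p v v - gdot g p u v ^ 2.
Proof.
  intros Hd Hli g. unfold g. rewrite gram_diag.
  assert (Hterm : forall i j, (i < 4)%nat -> (j < 4)%nat ->
            0 <= d i p * d j p * plucker u v i j ^ 2 /\
            (plucker u v i j <> 0 -> 0 < d i p * d j p * plucker u v i j ^ 2)).
  { intros i j Hi Hj. pose proof (Hd i Hi). pose proof (Hd j Hj).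
    assert (0 < d i p * d j p) by (apply Rmult_lt_0_compat; assumption).
    split; [apply Rmult_le_pos; [lra | apply pow2_ge_0]|].
    intro W. apply Rmult_lt_0_compat; [assumption | apply pow2_pos, W]. }
  destruct (Hterm 0 1 ltac:(lia) ltac:(lia))%nat as [N01 S01].
  destruct (Hterm 0 2 ltac:(lia) ltac:(lia))%nat as [N02 S02].
  destruct (Hterm 0 3 ltac:(lia) ltac:(lia))%nat as [N03 S03].
  destruct (Hterm 1 2 ltac:(lia) ltac:(lia))%nat as [N12 S12].
  destruct (Hterm 1 3 ltac:(lia) ltac:(lia))%nat as [N13 S13].
  destruct (Hterm 2 3 ltac:(lia) ltac:(lia))%nat as [N23 S23].
  destruct (plucker_nonzero u v Hli) as [W|[W|[[W|W]|[W|W]]]].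
  - pose proof (S01 W). lra.
  - pose proof (S23 W). lra.
  - pose proof (S02 W). lra.
  - pose proof (S12 W). lra.
  - pose proof (S03 W). lra.
  - pose proof (S13 W). lra.
Qed.

Lemma neg_def_binary_form a b c x y : a < 0 -> a * c > b ^ 2 -> (x <> 0 \/ y <> 0) ->
  a * x ^ 2 + 2 * b * x * y + c * y ^ 2 < 0.
Proof.
  intros Ha Hac Hxy.
  assert (Hsq : a * (a * x ^ 2 + 2 * b * x * y + c * y ^ 2)
               = (a * x + b * y) ^ 2 + (a * c - b ^ 2) * y ^ 2) by ring.
  enough (0 < (a * x + b * y) ^ 2 + (a * c - b ^ 2) * y ^ 2) by nra.
  destruct (Req_dec y 0) as [->|Hy].
  - destruct Hxy as [Hx|]; [|lra].
    assert (Hax : a * x <> 0) by (apply Rmult_integral_contrapositive; split; lra).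
    replace (a * x + b * 0) with (a * x) by ring.
    pose proof (pow2_pos _ Hax). nra.
  - pose proof (pow2_pos _ Hy). pose proof (pow2_ge_0 (a * x + b * y)). nra.
Qed.

Lemma neg_semidef_binary_form a b c x y : a < 0 -> a * c > b ^ 2 ->
  a * x ^ 2 + 2 * b * x * y + c * y ^ 2 <= 0.
Proof.
  intros Ha Hac.
  destruct (Req_dec x 0) as [->|Hx]; destruct (Req_dec y 0) as [->|Hy];
    try (apply Rlt_le, neg_def_binary_form; tauto).
  right. ring.
Qed.

Lemma curv_form_neg K01 K02 K03 K12 K13 K23 c2 c3 u v :
  K01 < 0 -> K23 < 0 -> K02 < 0 -> K02 * K12 > c2 ^ 2 -> K03 < 0 -> K03 * K13 > c3 ^ 2 ->
  lin_indep4 u v -> curv_form K01 K02 K03 K12 K13 K23 c2 c3 u v < 0.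
Proof.
  intros H01 H23 H02 Hb2 H03 Hb3 Hli. unfold curv_form.
  pose proof (neg_semidef_binary_form _ _ _ (plucker u v 0 2) (plucker u v 1 2) H02 Hb2).
  pose proof (neg_semidef_binary_form _ _ _ (plucker u v 0 3) (plucker u v 1 3) H03 Hb3).
  pose proof (pow2_ge_0 (plucker u v 0 1)). pose proof (pow2_ge_0 (plucker u v 2 3)).
  assert (K01 * plucker u v 0 1 ^ 2 <= 0) by nra.
  assert (K23 * plucker u v 2 3 ^ 2 <= 0) by nra.
  destruct (plucker_nonzero u v Hli) as [W|[W|[W|W]]].
  - pose proof (pow2_pos _ W). nra.
  - pose proof (pow2_pos _ W). nra.
  - pose proof (neg_def_binary_form _ _ _ _ _ H02 Hb2 W). lra.
  - pose proof (neg_def_binary_form _ _ _ _ _ H03 Hb3 W). lra.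
Qed.

(** ** The sign conditions for the metric *)

(** Condition (d) is exactly the negative definiteness of the two mixed
    blocks of [sol_curv_tensor] (for X = A or B). *)
Lemma sol_block_neg_def F F1 X : F <> 0 -> 0 < X ->
  1 - F * F1 > (1 + F1 / F) ^ 2 ->
  (- X) * (X * (F * F1 - 1)) > (X * (1 + F1 / F)) ^ 2.
Proof.
  intros HF HX Hd.
  assert (E : (- X) * (X * (F * F1 - 1)) - (X * (1 + F1 / F)) ^ 2
              = X ^ 2 * ((1 - F * F1) - (1 + F1 / F) ^ 2)) by (field; auto).
  assert (0 < X ^ 2 * ((1 - F * F1) - (1 + F1 / F) ^ 2)).
  { apply Rmult_lt_0_compat; [apply pow2_pos | ]; lra. }
  lra.
Qed.

Lemma sol_numerator_neg F F1 F2 A B u v :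
  F > 1 -> F2 > 0 -> 1 - F * F1 > (1 + F1 / F) ^ 2 -> 0 < A -> 0 < B -> lin_indep4 u v ->
  curv_form (- (F * F2)) (- A) (- B) (A * (F * F1 - 1)) (B * (F * F1 - 1))
    (A * B * (1 / F ^ 2 - 1)) (- (A * (1 + F1 / F))) (B * (1 + F1 / F)) u v < 0.
Proof.
  intros HF HF2 Hd HA HB Hli.
  assert (HF0 : F <> 0) by lra.
  assert (Hinv : 1 / F ^ 2 < 1).
  { apply (Rmult_lt_reg_r (F ^ 2)); [nra|]. field_simplify; nra. }
  apply curv_form_neg; try assumption.
  - nra.
  - assert (0 < A * B) by (apply Rmult_lt_0_compat; auto). nra.
  - lra.
  - replace ((- (A * (1 + F1 / F))) ^ 2) with ((A * (1 + F1 / F)) ^ 2) by ring.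
    apply sol_block_neg_def; auto.
  - lra.
  - apply sol_block_neg_def; auto.
Qed.

Theorem mainTheorem2 (I : R -> Prop) (f : R -> R) (D : nat -> R -> R) :
  is_open_interval I ->
  smooth_on_with I f D ->
  (forall t, I t -> f t > 0) ->
  (forall t, I t -> f t > 1) ->
  (forall t, I t -> D 1%nat t < 0) ->
  (forall t, I t -> D 2%nat t > 0) ->
  (forall t, I t -> 1 - f t * D 1%nat t > (1 + D 1%nat t / f t) ^ 2) ->
  forall p u v : pt, I (p 0%nat) -> lin_indep4 u v ->
    sectional_curvature (sol_metric f) (sol_metric_inv f) p u v < 0.
Proof.
  intros HI Hsmooth Hfpos Hf1 _ Hf2 Hd p u v Hp Hli.
  unfold sectional_curvature.
  rewrite (curvature_numerator_form _ _ _ _ _ _ _ _ _ u v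
             (riemann_sol I f D HI Hsmooth Hfpos p Hp)).
  apply Rmult_neg_pos.
  - apply sol_numerator_neg; auto; apply Rmult_lt_0_compat; apply exp_pos.
  - apply Rinv_0_lt_compat, (gram_diag_pos (sol_diag f)); [|exact Hli].
    intros i Hi. pose proof (Hf1 _ Hp).
    idx i; simpl; try (apply Rmult_lt_0_compat; apply exp_pos); nra.
Qed.
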